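(* Let $\sigma$ be an erasing $k$-block substitution with $w_\epsilon\ne1^k$ that satisfies the optimality condition. Then for every $x\in\mathbb I$ the fiber $f_\sigma^{-1}(x)$ is uncountable.
   Context: Notation: $\mathbb I=[0,1]$. $\{0,1\}^*$ and $\{0,1\}^\omega$ denote finite and infinite binary words, and $\epsilon$ is the empty word. For a word $w$, set $0.w=\sum_iw_i2^{-i}$. For $x\in(0,1]$, $\widetilde x$ is the unique infinite binary expansion of $x$ not ending in $0^\infty$. Fix $k\ge2$. An erasing $k$-block substitution is a map $\sigma:\{0,1\}^k\to\{0,1\}^*$ with exactly one block $w_\epsilon$ such that $\sigma(w_\epsilon)=\epsilon$. It acts blockwise on infinite words, concatenating the images of consecutive $k$-blocks. The map $f_\sigma:\mathbb I\to\mathbb I$ is defined by $f_\sigma(x)=0.\sigma(\widetilde x)$ if $x\in(0,1]$ and $\widetilde x\neq w_\epsilon^\infty$, and $f_\sigma(x)=0$ otherwise. Optimality condition: every $w\in\{0,1\}^\omega$ can be written as $w=\prod_{i\ge1}\sigma(b_i)$ with blocks $b_i\in\{0,1\}^k$ satisfying $\sigma(b_i)\ne\epsilon$. *)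

From HB Require Import structures.
From mathcomp Require Import all_boot all_order all_algebra.
From mathcomp Require Import all_classical all_reals all_analysis.
Set Implicit Arguments. Unset Strict Implicit. Unset Printing Implicit Defensive.
Import Order.TTheory GRing.Theory Num.Theory.
Import numFieldTopology.Exports numFieldNormedType.Exports.
Local Open Scope classical_set_scope.
Local Open Scope ring_scope.

Definition iword := nat -> bool.

(* 0.w for a finite word w : sum_i w_i 2^{-i} (1-based indices) *)
Definition dyadic {R : realType} (w : seq bool) : R :=
  \sum_(i < size w) (nth false w i)%:R / 2 ^+ i.+1.

Definition iprefix (e : iword) (n : nat) : seq bool := mkseq e n.

Definition val_inf {R : realType} (e : iword) : R :=
  limn (fun n => (dyadic (iprefix e n) : R)).

(* e is the infinite binary expansion of x not ending in 0^infty *)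
Definition is_tilde {R : realType} (x : R) (e : iword) : Prop :=
  (forall n, exists2 m, (n <= m)%N & e m = true) /\
  (fun n => (dyadic (iprefix e n) : R)) @ \oo --> x.

(* \widetilde x (meaningful for x in (0,1], where it exists and is unique) *)
Definition tilde {R : realType} (x : R) : iword :=
  xget (fun _ => false) [set e | is_tilde x e].

Definition block (k : nat) (e : iword) (j : nat) : k.-tuple bool :=
  [tuple e (j * k + i)%N | i < k].

Definition cat_prefix (u : nat -> seq bool) (n : nat) : seq bool :=
  flatten [seq u j | j <- iota 0 n].

Definition subst_prefix (k : nat) (sigma : k.-tuple bool -> seq bool)
  (e : iword) (n : nat) : seq bool :=
  cat_prefix (fun j => sigma (block k e j)) n.

(* 0.sigma(e): binary value of the (possibly finite) word sigma(e) *)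
Definition val_subst {R : realType} (k : nat)
  (sigma : k.-tuple bool -> seq bool) (e : iword) : R :=
  limn (fun n => (dyadic (subst_prefix sigma e n) : R)).

Definition per_word (k : nat) (w : k.-tuple bool) : iword :=
  fun n => nth false w (n %% k).

Definition erasing_with (k : nat) (sigma : k.-tuple bool -> seq bool)
  (weps : k.-tuple bool) : Prop :=
  sigma weps = [::] /\ forall b, sigma b = [::] -> b = weps.

Definition f_sigma {R : realType} (k : nat) (sigma : k.-tuple bool -> seq bool)
  (weps : k.-tuple bool) (x : R) : R :=
  if `[< 0 < x <= 1 /\ tilde x <> per_word weps >] then val_subst sigma (tilde x)
  else 0.

(* w is the infinite concatenation of the words u 0, u 1, ... (each assumed nonempty) *)
Definition is_inf_concat (w : iword) (u : nat -> seq bool) : Prop :=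
  forall n i, (i < size (cat_prefix u n))%N -> w i = nth false (cat_prefix u n) i.

Definition optimal (k : nat) (sigma : k.-tuple bool -> seq bool) : Prop :=
  forall w : iword, exists b : nat -> k.-tuple bool,
    (forall i, sigma (b i) <> [::]) /\ is_inf_concat w (fun i => sigma (b i)).

Definition ones_block (k : nat) : k.-tuple bool := [tuple true | _ < k].

From HB Require Import structures.
From mathcomp Require Import all_boot all_order all_algebra.
From mathcomp Require Import all_classical all_reals all_analysis.
From mathcomp Require Import lra.
Set Implicit Arguments. Unset Strict Implicit. Unset Printing Implicit Defensive.
Import Order.TTheory GRing.Theory Num.Theory.
Import numFieldTopology.Exports numFieldNormedType.Exports.
Local Open Scope classical_set_scope.
Local Open Scope ring_scope.

(* Fix x in [0,1] and let w be its greedy binary expansion, so that the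
   partial sums 0.w_1...w_n approximate x within 2^-n.  Optimality writes w
   as a concatenation sigma(b_0) sigma(b_1) ... of non-erased images, hence
   every b_i differs from the erased block w_eps.  For each c : nat -> bool
   we interleave the b_i with copies of w_eps, placing the pair
   (b_i, w_eps) or (w_eps, b_i) according to c i.  Since sigma erases w_eps,
   the image of every such word is again w, so its value y_c lies in the
   fiber over x.  The interleaved word contains infinitely many ones (b_i
   and w_eps differ, so one of them has a one), hence it is the expansion
   ~y_c, and distinct c give distinct words, hence distinct points y_c.
   Cantor's diagonal argument then shows the fiber is uncountable. *)

Section DyadicSums.
Context {R : realType}.
Implicit Types (e : iword) (m n : nat).

Definition dpart e n : R := \sum_(i < n) (e i)%:R / 2 ^+ i.+1.

Lemma dyadic_iprefix e n : dyadic (iprefix e n) = dpart e n.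
Proof.
rewrite /dyadic /iprefix /dpart size_mkseq; apply: eq_bigr => i _.
by rewrite nth_mkseq.
Qed.

Lemma dpartS e n : dpart e n.+1 = dpart e n + (e n)%:R / 2 ^+ n.+1.
Proof. by rewrite /dpart big_ord_recr. Qed.

Lemma inv_pow2_gt0 n : (0 : R) < (2 ^+ n)^-1.
Proof. by rewrite invr_gt0 exprn_gt0. Qed.

Lemma inv_pow2_half n : (2 ^+ n.+1 : R)^-1 + (2 ^+ n.+1)^-1 = (2 ^+ n)^-1.
Proof.
rewrite exprS invfM; have := inv_pow2_gt0 n.
set t := (2 ^+ n)^-1 => _; lra.
Qed.

Lemma dpart_mono e m n : (m <= n)%N -> dpart e m <= dpart e n.
Proof.
move/subnKC => <-; elim: (n - m)%N => [|p IH]; first by rewrite addn0.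
rewrite addnS dpartS; apply: (le_trans IH); rewrite lerDl.
by rewrite mulr_ge0 // ?invr_ge0 ?exprn_ge0.
Qed.

Lemma dpart_tail e m n : (m <= n)%N ->
  dpart e n <= dpart e m + ((2 ^+ m)^-1 - (2 ^+ n)^-1).
Proof.
move/subnKC => <-; elim: (n - m)%N => [|p IH].
  by rewrite addn0 subrr addr0 lexx.
rewrite addnS dpartS; have h := inv_pow2_half (m + p).
have hp := inv_pow2_gt0 (m + p).+1.
have : (e (m + p)%N)%:R / 2 ^+ (m + p).+1 <= (2 ^+ (m + p).+1 : R)^-1.
  by case: (e _) => /=; [rewrite mul1r | rewrite mul0r; apply: ltW].
lra.
Qed.

Lemma dpart_ge0 e n : 0 <= dpart e n.
Proof. by have := @dpart_mono e 0 n (leq0n n); rewrite /dpart big_ord0. Qed.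

Lemma dpart_le1 e n : dpart e n <= 1.
Proof.
have := @dpart_tail e 0 n (leq0n n); rewrite /dpart big_ord0 expr0 invr1.
have := inv_pow2_gt0 n; lra.
Qed.

Lemma dpart_cvg e : dpart e @ \oo --> (val_inf e : R).
Proof.
rewrite /val_inf.
have -> : (fun n => dyadic (iprefix e n) : R) = dpart e.
  by apply: funext => n; rewrite dyadic_iprefix.
apply: nondecreasing_is_cvgn; first by move=> m n; apply: dpart_mono.
by exists 1 => _ [n _ <-]; apply: dpart_le1.
Qed.

Lemma lim_le (u : nat -> R) (y B : R) :
  (forall n, u n <= B) -> u @ \oo --> y -> y <= B.
Proof.
move=> hB hc; rewrite -(cvg_lim _ hc) //; apply: limr_le; first exact: cvgP hc.
by exists 0%N.
Qed.

Lemma lim_ge (u : nat -> R) (y B : R) N :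
  (forall n, (N <= n)%N -> B <= u n) -> u @ \oo --> y -> B <= y.
Proof.
move=> hB hc; rewrite -(cvg_lim _ hc) //; apply: limr_ge; first exact: cvgP hc.
by exists N.
Qed.

(* A sequence whose n-th term is within 2^-m of x, for some m >= n/2,
   converges to x; this is the rate at which sigma-images approximate. *)
Lemma cvg_pow2_rate (u : nat -> R) x :
  (forall n, exists2 m, (n./2 <= m)%N & `|x - u n| <= (2 ^+ m)^-1) ->
  u @ \oo --> x.
Proof.
move=> H; apply/cvgrPdist_le => eps eps0.
have hz : `|(2 : R)^-1| < 1 by rewrite ger0_norm ?invr_ge0 // invf_lt1 // ltr1n.
have /cvgrPdist_le/(_ eps eps0)[N _ HN] := cvg_expr hz.
exists N.*2 => // n /= hn; have [m hm hx] := H n; apply: (le_trans hx).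
have /HN : (N <= m)%N.
  by apply: leq_trans hm; rewrite -(half_double N); exact: half_leq.
by rewrite sub0r normrN exprVn ger0_norm // invr_ge0 exprn_ge0.
Qed.

End DyadicSums.

Section GreedyExpansion.
Context {R : realType}.
Variable x : R.

Fixpoint greedy_sum n : R :=
  if n is n'.+1 then
    (if greedy_sum n' + (2 ^+ n'.+1)^-1 <= x
     then greedy_sum n' + (2 ^+ n'.+1)^-1 else greedy_sum n')
  else 0.

Definition greedy_word : iword :=
  fun n => greedy_sum n + (2 ^+ n.+1)^-1 <= x.

Lemma dpart_greedy n : dpart greedy_word n = greedy_sum n.
Proof.
elim: n => [|n IH]; first by rewrite /dpart big_ord0.
rewrite dpartS IH /= /greedy_word; case: ifP => _ /=; first by rewrite mul1r.
by rewrite mul0r addr0.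
Qed.

Lemma greedy_error : 0 <= x <= 1 ->
  forall n, `|x - dpart greedy_word n| <= (2 ^+ n)^-1.
Proof.
move=> /andP[x0 x1] n; rewrite dpart_greedy.
suff /andP[h1 h2] : 0 <= x - greedy_sum n <= (2 ^+ n)^-1 by rewrite ger0_norm.
elim: n => [|n IH]; first by rewrite /= subr0 expr0 invr1 x0 x1.
have h := inv_pow2_half (R := R) n; case/andP: IH => h1 h2.
by rewrite /=; case: ifP => hc; apply/andP; split; lra.
Qed.

End GreedyExpansion.

Section TildeExpansion.
Context {R : realType}.
Implicit Types (e : iword) (y : R).

Definition inf_ones e := forall n, exists2 m, (n <= m)%N & e m = true.

(* Two expansions of y agreeing before m cannot have digits 0 and 1 at m:
   the first is at most its prefix + 2^-(m+1), the second strictly more. *)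
Lemma is_tilde_first_diff e e' y m : is_tilde y e -> is_tilde y e' ->
  (forall i, (i < m)%N -> e i = e' i) -> e m = false -> e' m = true -> False.
Proof.
move=> [_ ce] [inf' ce'] heq em em'.
have Deq : dpart e m = dpart e' m :> R by apply: eq_bigr => i _; rewrite heq.
have hm := inv_pow2_gt0 (R := R) m.+1.
have e1 : dpart e m.+1 = dpart e m :> R by rewrite dpartS em mul0r addr0.
have up : y <= dpart e m + (2 ^+ m.+1)^-1.
  apply: (lim_le _ ce) => n; rewrite dyadic_iprefix.
  case: (leqP n m.+1) => hn.
    by rewrite -e1; apply: (le_trans (dpart_mono e hn)); rewrite lerDl ltW.
  have := dpart_tail (R := R) e (ltnW hn); rewrite e1; have := inv_pow2_gt0 (R := R) n.
  lra.
have [j hj ej] := inf' m.+1.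
have hj1 := inv_pow2_gt0 (R := R) j.+1.
have lo : dpart e m + (2 ^+ m.+1)^-1 + (2 ^+ j.+1)^-1 <= y.
  apply: (lim_ge (N := j.+1) _ ce') => n hn; rewrite dyadic_iprefix.
  apply: le_trans (dpart_mono e' hn); rewrite dpartS ej mul1r lerD2r.
  by apply: le_trans (dpart_mono e' hj); rewrite dpartS em' mul1r Deq.
lra.
Qed.

Lemma is_tilde_unique e e' y : is_tilde y e -> is_tilde y e' -> e = e'.
Proof.
move=> h h'; apply: funext => n; apply/eqP; apply: contraT => hne.
have [m hm hmin] := ex_minnP (ex_intro (fun n => e n != e' n) n hne).
have heq i : (i < m)%N -> e i = e' i.
  by move=> hi; apply/eqP; apply: contraT => /hmin; rewrite leqNgt hi.
move: hm; case em: (e m); case em': (e' m) => // _; exfalso.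
  by apply: (is_tilde_first_diff h' h) em' em => i /heq.
exact: (is_tilde_first_diff h h' heq).
Qed.

Lemma inf_ones_is_tilde e : inf_ones e -> is_tilde (val_inf e : R) e.
Proof.
move=> he; split=> //; have -> : (fun n => dyadic (iprefix e n) : R) = dpart e.
  by apply: funext => n; rewrite dyadic_iprefix.
exact: dpart_cvg.
Qed.

Lemma inf_ones_tilde e : inf_ones e -> tilde (val_inf e : R) = e.
Proof.
move=> he; have he' : is_tilde (val_inf e : R) e := inf_ones_is_tilde he.
by apply: (is_tilde_unique _ he'); apply: xgetPex; exists e.
Qed.

Lemma inf_ones_val_range e : inf_ones e -> 0 < (val_inf e : R) <= 1.
Proof.
move=> he; have hc := dpart_cvg (R := R) (e := e).
rewrite (lim_le _ hc) ?andbT => [|n]; last exact: dpart_le1.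
have [p _ hp] := he 0%N; have hp1 := inv_pow2_gt0 (R := R) p.+1.
apply: (lt_le_trans hp1); apply: (lim_ge (N := p.+1) _ hc) => n hn.
apply: le_trans (dpart_mono e hn).
by rewrite dpartS hp mul1r lerDr dpart_ge0.
Qed.

End TildeExpansion.

Section Concatenation.
Implicit Types (u : nat -> seq bool) (w : iword).

Lemma cat_prefixS u n : cat_prefix u n.+1 = cat_prefix u n ++ u n.
Proof. by rewrite /cat_prefix -addn1 iotaD map_cat flatten_cat /= cats0. Qed.

Lemma size_cat_prefix u j :
  (forall i, u i != [::]) -> (j <= size (cat_prefix u j))%N.
Proof.
move=> hu; elim: j => [//|j IH].
by rewrite cat_prefixS size_cat -addn1 leq_add // lt0n size_eq0.
Qed.

Lemma inf_concat_prefix w u j : is_inf_concat w u ->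
  cat_prefix u j = iprefix w (size (cat_prefix u j)).
Proof.
move=> hw; apply: (@eq_from_nth _ false); first by rewrite size_mkseq.
by move=> i hi; rewrite nth_mkseq // -hw.
Qed.

End Concatenation.

Lemma neq_tuple_has_one k (t1 t2 : k.-tuple bool) : t1 != t2 ->
  exists2 i, (i < k)%N & nth false t1 i || nth false t2 i.
Proof.
move=> hne; case: (boolP [exists i : 'I_k, tnth t1 i || tnth t2 i]).
  by move/existsP => [i hi]; exists i => //; rewrite -!tnth_nth.
move/existsPn => h; case/negP: hne; apply/eqP/eq_from_tnth => i.
by move: (h i); case: (tnth t1 i); case: (tnth t2 i).
Qed.

Section Interleaving.
Variables (k : nat) (sigma : k.-tuple bool -> seq bool).
Variables (weps : k.-tuple bool) (b : nat -> k.-tuple bool).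
Hypothesis k_gt0 : (0 < k)%N.
Hypothesis sigma_weps : sigma weps = [::].
Hypothesis sigma_b : forall i, sigma (b i) != [::].

Lemma b_neq_weps i : b i != weps.
Proof. by apply: contra (sigma_b i) => /eqP ->; rewrite sigma_weps. Qed.

(* Blocks 2i and 2i+1 are (b i, weps) if c i holds, (weps, b i) otherwise. *)
Definition interleave_block (c : nat -> bool) j :=
  if c j./2 (+) odd j then b j./2 else weps.

Definition interleave_word (c : nat -> bool) : iword :=
  fun n => nth false (interleave_block c (n %/ k)) (n %% k).

Lemma interleave_word_at c j i : (i < k)%N ->
  interleave_word c (j * k + i) = nth false (interleave_block c j) i.
Proof.
by move=> hi; rewrite /interleave_word divnMDl // divn_small // addn0
  modnMDl modn_small.
Qed.

Lemma block_interleave c j : block k (interleave_word c) j = interleave_block c j.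
Proof.
apply: eq_from_tnth => i.
by rewrite tnth_mktuple interleave_word_at // (tnth_nth false).
Qed.

Lemma block_per_word j : block k (per_word weps) j = weps.
Proof.
apply: eq_from_tnth => i.
by rewrite tnth_mktuple /per_word modnMDl modn_small // (tnth_nth false).
Qed.

Lemma interleave_even c i :
  interleave_block c i.*2 = if c i then b i else weps.
Proof. by rewrite /interleave_block odd_double half_double addbF. Qed.

Lemma interleave_odd c i :
  interleave_block c i.*2.+1 = if c i then weps else b i.
Proof.
by rewrite /interleave_block /= odd_double uphalf_double /=; case: (c i).
Qed.

(* Every position i is followed by a copy of b i and of weps. *)
Lemma interleave_word_inf_ones c : inf_ones (interleave_word c).
Proof.
move=> n; have [i hi h] := neq_tuple_has_one (b_neq_weps n).
have late j : (n.*2 <= j)%N -> (n <= j * k + i)%N.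
  move=> hj; apply: leq_trans (leq_addr _ _); apply: leq_trans (leq_pmulr _ k_gt0).
  by apply: leq_trans hj; rewrite -addnn leq_addr.
have [jb hjb jbP] : exists2 j, (n.*2 <= j)%N & interleave_block c j = b n.
  by case hc: (c n); [exists n.*2; rewrite ?interleave_even ?hc |
    exists n.*2.+1; rewrite ?interleave_odd ?hc].
have [jw hjw jwP] : exists2 j, (n.*2 <= j)%N & interleave_block c j = weps.
  by case hc: (c n); [exists n.*2.+1; rewrite ?interleave_odd ?hc |
    exists n.*2; rewrite ?interleave_even ?hc].
case/orP: h => h.
  by exists (jb * k + i)%N; [exact: late hjb | rewrite interleave_word_at // jbP].
by exists (jw * k + i)%N; [exact: late hjw | rewrite interleave_word_at // jwP].
Qed.

Lemma interleave_word_not_per c : interleave_word c <> per_word weps.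
Proof.
move=> h; have := block_interleave c (~~ c 0%N).
rewrite h block_per_word /interleave_block.
case hc: (c 0%N); rewrite /= hc /= => hw.
all: by move: (b_neq_weps 0); rewrite -hw eqxx.
Qed.

Lemma interleave_word_inj : injective interleave_word.
Proof.
move=> c c' h; apply: funext => i.
have : interleave_block c i.*2 = interleave_block c' i.*2.
  by rewrite -!block_interleave h.
have := b_neq_weps i; rewrite !interleave_even.
by case: (c i); case: (c' i) => // /negbTE hb /eqP; rewrite ?hb // eq_sym hb.
Qed.

Lemma subst_prefix_interleave c n :
  subst_prefix sigma (interleave_word c) n =
  cat_prefix (fun j => sigma (interleave_block c j)) n.
Proof.
by congr cat_prefix; apply: funext => j; rewrite block_interleave.
Qed.

Lemma subst_interleave_even c i :
  cat_prefix (fun j => sigma (interleave_block c j)) i.*2 =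
  cat_prefix (fun j => sigma (b j)) i.
Proof.
elim: i => [//|i IH]; rewrite doubleS !cat_prefixS IH.
rewrite interleave_even interleave_odd -catA.
by case: (c i); rewrite sigma_weps ?cats0.
Qed.

Lemma subst_interleave c n : exists2 j, (n./2 <= j)%N &
  subst_prefix sigma (interleave_word c) n = cat_prefix (fun j => sigma (b j)) j.
Proof.
rewrite subst_prefix_interleave -(odd_double_half n).
case: (odd n) => /=; last first.
  by exists n./2; rewrite ?add0n ?half_double ?subst_interleave_even.
rewrite add1n cat_prefixS subst_interleave_even interleave_even uphalf_double.
case: (c n./2); last by exists n./2; rewrite ?sigma_weps ?cats0.
by exists n./2.+1; rewrite ?cat_prefixS.
Qed.

Lemma f_sigma_interleave {R : realType} (x : R) (w : iword) c :
  is_inf_concat w (fun i => sigma (b i)) ->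
  (forall n, `|x - dpart w n| <= (2 ^+ n)^-1) ->
  f_sigma sigma weps (val_inf (interleave_word c) : R) = x.
Proof.
move=> hcat happrox; have hones := interleave_word_inf_ones c.
rewrite /f_sigma asboolT; last first.
  split; first exact: inf_ones_val_range.
  by rewrite inf_ones_tilde //; exact: interleave_word_not_per.
rewrite inf_ones_tilde // /val_subst; apply: cvg_lim => //.
apply: cvg_pow2_rate => n; have [j hj ->] := subst_interleave c n.
rewrite (inf_concat_prefix _ hcat) dyadic_iprefix; eexists; last exact: happrox.
by apply: leq_trans hj (size_cat_prefix _ _).
Qed.

End Interleaving.

(* Cantor's diagonal argument: infinite binary sequences do not inject into
   nat, so a set receiving an injection from them is uncountable. *)
Lemma no_injection_bits_nat (h : (nat -> bool) -> nat) : ~ injective h.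
Proof.
move=> hinj; pose d n := ~~ `[< exists c, h c = n /\ c n >].
have hd : `[< exists c, h c = h d /\ c (h d) >] = d (h d).
  apply/asboolP/idP => [[c [hc hcn]] | H]; last by exists d.
  by move: hcn; rewrite (hinj _ _ hc).
have : d (h d) = ~~ d (h d) by rewrite {1}/d hd.
by case: (d (h d)).
Qed.

Lemma uncountable_of_injection {T} (A : set T) (g : (nat -> bool) -> T) :
  (forall c, A (g c)) -> injective g -> ~ countable A.
Proof.
move=> gA ginj /countable_injP[f finj].
apply: (no_injection_bits_nat (h := f \o g)) => c c' /= hfg.
by apply: ginj; apply: finj; rewrite ?inE.
Qed.

Theorem corollary1 (R : realType) (k : nat) (hk : (2 <= k)%N)
  (sigma : k.-tuple bool -> seq bool) (weps : k.-tuple bool)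
  (herase : erasing_with sigma weps)
  (hw : weps <> ones_block k)
  (hopt : optimal sigma) :
  forall x : R, 0 <= x <= 1 ->
    ~ countable [set y : R | 0 <= y <= 1 /\ f_sigma sigma weps y = x].
Proof.
move=> x hx; have k_gt0 : (0 < k)%N by apply: leq_trans hk.
have [sigma_weps _] := herase.
have [b [hb hcat]] := hopt (greedy_word x).
have sigma_b i : sigma (b i) != [::] by apply/eqP; exact: hb.
have ones c := interleave_word_inf_ones k_gt0 sigma_weps sigma_b c.
pose y c : R := val_inf (interleave_word weps b c).
have y_tilde c : tilde (y c) = interleave_word weps b c := inf_ones_tilde (ones c).
apply: (uncountable_of_injection (g := y)) => [c | c c' hcc].
  split; last exact: f_sigma_interleave (greedy_error hx).
  by have /andP[y0 y1] := inf_ones_val_range (R := R) (ones c); rewrite ltW.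
apply: (interleave_word_inj k_gt0 sigma_weps sigma_b).
by rewrite -!y_tilde hcc.
Qed.
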